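(* Let $G$ be an equationally Noetherian group with a solvable word problem. Then every finitely generated, recursively presented group $H$ which is residually $G$ has a solvable word problem.
   Context: A group $G$ is equationally Noetherian if for every finite tuple of variables $\mathbf{x}=(x_1,\dots,x_n)$ and every set $\Sigma\subseteq G\ast F(\mathbf{x})$ of equations over $G$, there is a finite subset $\Sigma_0\subseteq\Sigma$ such that the set of solutions $\{\mathbf{g}\in G^n : \sigma(\mathbf{g})=1\ \forall\sigma\in\Sigma\}$ equals $\{\mathbf{g}\in G^n : \sigma(\mathbf{g})=1\ \forall\sigma\in\Sigma_0\}$, where $\sigma(\mathbf{g})$ is obtained by substituting $g_i$ for $x_i$. A group $H$ is residually $G$ if for every $1\ne h\in H$ there is a homomorphism $f:H\to G$ with $f(h)\ne 1$. *)

From mathcomp Require Import all_boot.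
Set Implicit Arguments. Unset Strict Implicit. Unset Printing Implicit Defensive.

Record group := Group {
  gcar :> Type;
  gmul : gcar -> gcar -> gcar;
  ginv : gcar -> gcar;
  gone : gcar;
  gmulA : forall x y z, gmul x (gmul y z) = gmul (gmul x y) z;
  gmul1 : forall x, gmul gone x = x;
  gmulV : forall x, gmul (ginv x) x = gone
}.

Definition is_hom (H G : group) (f : H -> G) : Prop :=
  forall a b : H, f (gmul a b) = gmul (f a) (f b).

Definition residually (H G : group) : Prop :=
  forall h : H, h <> gone H -> exists f : H -> G, is_hom f /\ f h <> gone G.

(* Words over an alphabet A: letters (a, false) = a, (a, true) = a^-1. *)
Definition word (A : Type) := seq (A * bool).

Definition eval_letter (G : group) (A : Type) (e : A -> G) (l : A * bool) : G :=
  if l.2 then ginv (e l.1) else e l.1.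

Definition eval_word (G : group) (A : Type) (e : A -> G) (w : word A) : G :=
  foldr (fun l x => gmul (eval_letter e l) x) (gone G) w.

Definition inv_letter (A : Type) (l : A * bool) : A * bool := (l.1, ~~ l.2).

Definition generates (G : group) (m : nat) (gen : 'I_m -> G) : Prop :=
  forall g : G, exists w : word 'I_m, eval_word gen w = g.

(* Equations over G in variables x_1..x_n: words over the alphabet      *)
(* G + {x_1..x_n} (constants from G and variables), i.e. representatives *)
(* of elements of G * F(x).                                              *)
Definition equation (G : group) (n : nat) := word (G + 'I_n)%type.

Definition subst (G : group) (n : nat) (g : 'I_n -> G) (a : (G + 'I_n)%type) : G :=
  match a with inl c => c | inr i => g i end.

Definition solves (G : group) (n : nat) (Sigma : equation G n -> Prop)
  (g : 'I_n -> G) : Prop :=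
  forall s, Sigma s -> eval_word (subst g) s = gone G.

Fixpoint inl_ (T : Type) (x : T) (s : seq T) : Prop :=
  match s with [::] => False | y :: s' => y = x \/ inl_ x s' end.

Definition equationally_noetherian (G : group) : Prop :=
  forall (n : nat) (Sigma : equation G n -> Prop),
    exists Sigma0 : seq (equation G n),
      (forall s, inl_ s Sigma0 -> Sigma s) /\
      (forall g : 'I_n -> G,
          solves Sigma g <-> solves (fun s => inl_ s Sigma0) g).

Inductive code : Type :=
| Zero : code
| Succ : code
| Proj : nat -> code
| Comp : code -> seq code -> code
| Prim : code -> code -> code
| Mu : code -> code.

Inductive eval : code -> seq nat -> nat -> Prop :=
| ev_zero v : eval Zero v 0
| ev_succ x v : eval Succ (x :: v) x.+1
| ev_proj i v : i < size v -> eval (Proj i) v (nth 0 v i)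
| ev_comp f gs v ws y : evals gs v ws -> eval f ws y -> eval (Comp f gs) v y
| ev_prim0 f g v y : eval f v y -> eval (Prim f g) (0 :: v) y
| ev_primS f g n v z y :
    eval (Prim f g) (n :: v) z -> eval g (n :: z :: v) y ->
    eval (Prim f g) (n.+1 :: v) y
| ev_mu f v n :
    eval f (n :: v) 0 ->
    (forall m, m < n -> exists k, eval f (m :: v) k.+1) ->
    eval (Mu f) v n
with evals : seq code -> seq nat -> seq nat -> Prop :=
| evs_nil v : evals [::] v [::]
| evs_cons g gs v y ys : eval g v y -> evals gs v ys -> evals (g :: gs) v (y :: ys).

(* Words over 'I_m are coded as natural numbers by the (computable) *)
(* canonical countType encoding [pickle].                            *)

Definition re_words (m : nat) (R : word 'I_m -> Prop) : Prop :=
  exists c : code, forall w : word 'I_m, R w <-> exists y, eval c [:: pickle w] y.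

Definition solvable_WP_wrt (G : group) (m : nat) (gen : 'I_m -> G) : Prop :=
  exists c : code, forall w : word 'I_m,
    (eval_word gen w = gone G -> eval c [:: pickle w] 0) /\
    (eval_word gen w <> gone G -> eval c [:: pickle w] 1).

Definition has_solvable_WP (G : group) : Prop :=
  exists (m : nat) (gen : 'I_m -> G), generates gen /\ solvable_WP_wrt gen.

(* trivial_in R w : w represents 1 in <x | R>, i.e. w is reachable from *)
(* the empty word by inserting/deleting cancelling pairs a a^-1 and      *)
(* relators r in R (in arbitrary positions).                             *)
Inductive trivial_in (k : nat) (R : word 'I_k -> Prop) : word 'I_k -> Prop :=
| tr_nil : trivial_in R [::]
| tr_ins_pair u v a :
    trivial_in R (u ++ v) -> trivial_in R (u ++ [:: a; inv_letter a] ++ v)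
| tr_del_pair u v a :
    trivial_in R (u ++ [:: a; inv_letter a] ++ v) -> trivial_in R (u ++ v)
| tr_ins_rel u v r :
    R r -> trivial_in R (u ++ v) -> trivial_in R (u ++ r ++ v)
| tr_del_rel u v r :
    R r -> trivial_in R (u ++ r ++ v) -> trivial_in R (u ++ v).

Definition presents (H : group) (k : nat) (h : 'I_k -> H)
  (R : word 'I_k -> Prop) : Prop :=
  generates h /\ forall w, eval_word h w = gone H <-> trivial_in R w.

Definition recursively_presented_wrt (H : group) (k : nat) (h : 'I_k -> H) : Prop :=
  exists R : word 'I_k -> Prop, re_words R /\ presents h R.

(* A word [w] over the generators of [H] is trivial iff it can be derived from the
   empty word by inserting and deleting cancelling pairs and relators; as the
   relators are recursively enumerable, such derivations can be searched for.
   If [w] is nontrivial, residuality gives a homomorphism [f : H -> G] with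
   [f w <> 1], described by words over the generators of [G] for the images of the
   generators of [H].  Equational noetherianity provides a finite set [R0] of
   relators such that every assignment of the generators in [G] satisfying [R0]
   satisfies all relators, hence extends to a homomorphism; so a tuple of words
   satisfying [R0] and not killing [w] is a witness of nontriviality that the word
   problem algorithm of [G] can check.  Certificates of both kinds are coded by
   natural numbers and recognised by a total computable check built from
   step-bounded evaluation of Kleene codes, and an unbounded search for a
   certificate decides the word problem of [H]. *)

From mathcomp Require Import all_boot.
From Stdlib Require Import Classical.
Set Implicit Arguments. Unset Strict Implicit. Unset Printing Implicit Defensive.

(** * Total computable functions *)

Definition computable (n : nat) (f : seq nat -> nat) :=
  exists c, forall v, size v = n -> eval c v (f v).

Lemma eq_computable n f g :
  (forall v, size v = n -> f v = g v) -> computable n f -> computable n g.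
Proof. by move=> fg [c Hc]; exists c => v sv; rewrite -fg //; apply: Hc. Qed.

Lemma computable_const n k : computable n (fun _ => k).
Proof.
elim: k => [|k [c Hc]]; first by exists Zero => v _; constructor.
exists (Comp Succ [:: c]) => v sv; econstructor; last by constructor.
by constructor; [apply: Hc | constructor].
Qed.

Lemma computable_nth n i : i < n -> computable n (fun v => nth 0 v i).
Proof. by move=> lin; exists (Proj i) => v sv; constructor; rewrite sv. Qed.

Definition all_computable n (fs : seq (seq nat -> nat)) :=
  foldr (fun f P => computable n f /\ P) True fs.

Lemma computable_comp n g fs : computable (size fs) g -> all_computable n fs ->
  computable n (fun v => g (map (fun f => f v) fs)).
Proof.
move=> [cg Hg] Hfs.
have [cs Hcs] : exists cs, forall v, size v = n -> evals cs v (map (fun f => f v) fs).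
  elim: fs Hfs {Hg} => [_|f fs IH [[c Hc] /IH [cs Hcs]]] /=.
    by exists [::] => v _; constructor.
  by exists (c :: cs) => v sv; constructor; [apply: Hc | apply: Hcs].
exists (Comp cg cs) => v sv; econstructor; first exact: Hcs.
by apply: Hg; rewrite size_map.
Qed.

Lemma computable_comp1 n g f : computable 1 (fun v => g (nth 0 v 0)) ->
  computable n f -> computable n (fun v => g (f v)).
Proof. by move=> Hg Hf; apply: (@computable_comp n _ [:: f] Hg). Qed.

Lemma computable_comp2 n g f1 f2 :
  computable 2 (fun v => g (nth 0 v 0) (nth 0 v 1)) ->
  computable n f1 -> computable n f2 -> computable n (fun v => g (f1 v) (f2 v)).
Proof. by move=> Hg H1 H2; apply: (@computable_comp n _ [:: f1; f2] Hg). Qed.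

Lemma computable_comp3 n g f1 f2 f3 :
  computable 3 (fun v => g (nth 0 v 0) (nth 0 v 1) (nth 0 v 2)) ->
  computable n f1 -> computable n f2 -> computable n f3 ->
  computable n (fun v => g (f1 v) (f2 v) (f3 v)).
Proof. by move=> Hg H1 H2 H3; apply: (@computable_comp n _ [:: f1; f2; f3] Hg). Qed.

Fixpoint prec (g0 gS : seq nat -> nat) (j : nat) (v : seq nat) : nat :=
  if j is j'.+1 then gS (j' :: prec g0 gS j' v :: v) else g0 v.

Lemma computable_prec n g0 gS : computable n g0 -> computable n.+2 gS ->
  computable n.+1 (fun v => prec g0 gS (head 0 v) (behead v)).
Proof.
move=> [c0 H0] [cS HS]; exists (Prim c0 cS) => -[|j v] //= [sv].
elim: j => [|j IH] /=; first by constructor; apply: H0.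
by econstructor; [exact: IH | apply: HS; rewrite /= sv].
Qed.

Lemma all_computable_nth n idx : all (fun i => i < n) idx ->
  all_computable n [seq (fun v => nth 0 v i) | i <- idx].
Proof.
elim: idx => //= i idx IH /andP [lin /IH]; split => //; exact: computable_nth.
Qed.

Lemma computable_reindex n f idx : all (fun i => i < n) idx ->
  computable (size idx) f -> computable n (fun v => f (map (nth 0 v) idx)).
Proof.
move=> lt_idx Hf; have := @computable_comp n f [seq (fun v => nth 0 v i) | i <- idx].
rewrite size_map => /(_ Hf (all_computable_nth lt_idx)).
by apply: eq_computable => v _; rewrite -map_comp.
Qed.

Lemma computable_succ n f : computable n f -> computable n (fun v => (f v).+1).
Proof.
apply: (computable_comp1 (g := succn)).
by exists Succ => -[|a []] //= _; constructor.
Qed.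

Lemma computable_addn n f g :
  computable n f -> computable n g -> computable n (fun v => f v + g v).
Proof.
apply: (computable_comp2 (g := addn)).
have := @computable_prec 1 (fun v => nth 0 v 0) (fun v => (nth 0 v 1).+1)
  (@computable_nth 1 0 isT) (computable_succ (@computable_nth 3 1 isT)).
by apply: eq_computable => -[|a [|b []]] //= _; elim: a => //= a ->.
Qed.

Lemma computable_predn n f : computable n f -> computable n (fun v => (f v).-1).
Proof.
apply: (computable_comp1 (g := predn)).
have := @computable_prec 0 (fun _ => 0) (fun v => nth 0 v 0)
  (computable_const _ _) (@computable_nth 2 0 isT).
by apply: eq_computable => -[|[|a] []].
Qed.

Lemma computable_subn n f g :
  computable n f -> computable n g -> computable n (fun v => f v - g v).
Proof.
apply: (computable_comp2 (g := subn)).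
have := @computable_prec 1 (fun v => nth 0 v 0) (fun v => (nth 0 v 1).-1)
  (@computable_nth 1 0 isT) (computable_predn (@computable_nth 3 1 isT)).
move=> /(@computable_reindex 2 _ [:: 1; 0] isT).
apply: eq_computable => -[|a [|b []]] //= _.
by elim: b => [|b /= ->]; rewrite ?subn0 ?subnS.
Qed.

Lemma computable_muln n f g :
  computable n f -> computable n g -> computable n (fun v => f v * g v).
Proof.
apply: (computable_comp2 (g := muln)).
have := @computable_prec 1 (fun _ => 0) (fun v => nth 0 v 1 + nth 0 v 2)
  (computable_const _ _) (computable_addn (@computable_nth 3 1 isT) (@computable_nth 3 2 isT)).
by apply: eq_computable => -[|a [|b []]] //= _; elim: a => //= a ->; rewrite mulSn addnC.
Qed.

Lemma computable_ifz n f g h : computable n f -> computable n g -> computable n h ->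
  computable n (fun v => if f v == 0 then g v else h v).
Proof.
apply: (computable_comp3 (g := fun a b c => if a == 0 then b else c)).
have := @computable_prec 2 (fun v => nth 0 v 0) (fun v => nth 0 v 3)
  (@computable_nth 2 0 isT) (@computable_nth 4 3 isT).
by apply: eq_computable => -[|[|a] [|b [|c []]]].
Qed.

Lemma computable_if n (b : seq nat -> bool) g h :
  computable n b -> computable n g -> computable n h ->
  computable n (fun v => if b v then g v else h v).
Proof.
move=> Hb Hg Hh; have := computable_ifz Hb Hh Hg.
by apply: eq_computable => v _; case: (b v).
Qed.

Lemma computable_ifb n (b c1 c2 : seq nat -> bool) :
  computable n b -> computable n c1 -> computable n c2 ->
  computable n (fun v => if b v then c1 v else c2 v).
Proof.
move=> Hb H1 H2; have := computable_if Hb H1 H2.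
by apply: eq_computable => v _; case: (b v).
Qed.

Lemma computable_eqn n f g :
  computable n f -> computable n g -> computable n (fun v => f v == g v).
Proof.
move=> Hf Hg; have := computable_ifz (computable_addn (computable_subn Hf Hg)
  (computable_subn Hg Hf)) (computable_const n 1) (computable_const n 0).
by apply: eq_computable => v _; rewrite addn_eq0 !subn_eq0 -eqn_leq; case: eqP.
Qed.

Lemma computable_ltn n f g :
  computable n f -> computable n g -> computable n (fun v => f v < g v).
Proof.
move=> Hf Hg; have := computable_ifz (computable_subn (computable_succ Hf) Hg)
  (computable_const n 1) (computable_const n 0).
by apply: eq_computable => v _; rewrite subn_eq0; case: leqP.
Qed.

Lemma computable_andb n (b c : seq nat -> bool) :
  computable n b -> computable n c -> computable n (fun v => b v && c v).
Proof.
move=> Hb Hc; have := computable_muln Hb Hc.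
by apply: eq_computable => v _; case: (b v); case: (c v).
Qed.

Lemma computable_orb n (b c : seq nat -> bool) :
  computable n b -> computable n c -> computable n (fun v => b v || c v).
Proof.
move=> Hb Hc; have := computable_if Hb (computable_const n 1) Hc.
by apply: eq_computable => v _; case: (b v).
Qed.

Lemma computable_negb n (b : seq nat -> bool) :
  computable n b -> computable n (fun v => ~~ b v).
Proof.
move=> Hb; have := computable_if Hb (computable_const n 0) (computable_const n 1).
by apply: eq_computable => v _; case: (b v).
Qed.

Lemma drop_map_nth (v : seq nat) k m : size v = m + k ->
  drop k v = map (nth 0 v) (map (addn k) (iota 0 m)).
Proof.
move=> sv; apply: (@eq_from_nth _ 0).
  by rewrite size_drop !size_map size_iota sv addnK.
move=> i; rewrite size_drop sv addnK => lim.
by rewrite nth_drop (nth_map 0) ?size_map ?size_iota // (nth_map 0) ?size_iota // nth_iota.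
Qed.

Lemma computable_comp_drop n k g fs :
  computable (size fs + n) g -> all_computable (n + k) fs ->
  computable (n + k) (fun u => g (map (fun f => f u) fs ++ drop k u)).
Proof.
move=> Hg Hfs.
set ps := [seq (fun v => nth 0 v i) | i <- map (addn k) (iota 0 n)].
have Hall : all_computable (n + k) (fs ++ ps).
  elim: fs Hfs {Hg} => [_|f fs IH [Hf /IH]] //=.
  rewrite {}/ps; apply: all_computable_nth; apply/allP => i /mapP [j].
  by rewrite mem_iota => /andP [_ ljn] ->; rewrite addnC ltn_add2r.
have Hg' : computable (size (fs ++ ps)) g by rewrite size_cat !size_map size_iota.
have [c Hc] := computable_comp Hg' Hall.
exists c => v sv; have := Hc v sv.
by rewrite map_cat /ps -map_comp (@drop_map_nth v k n) // addnC.
Qed.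

Lemma computable_drop n k f : computable n f -> computable (n + k) (fun u => f (drop k u)).
Proof. by move=> Hf; apply: (@computable_comp_drop n k f [::]). Qed.

Lemma computable_cons n f g : computable n.+1 g -> computable n f ->
  computable n (fun v => g (f v :: v)).
Proof.
move=> Hg Hf; have := @computable_comp_drop n 0 g [:: f]; rewrite addn0.
by case=> // c Hc; exists c => v sv; have := Hc v sv; rewrite drop0.
Qed.

Lemma computable_head n : computable n.+1 (fun u => head 0 u).
Proof. by apply: eq_computable (@computable_nth n.+1 0 isT) => -[]. Qed.

Lemma computable_nth_behead n i : i.+1 < n -> computable n (fun u => nth 0 (behead u) i).
Proof.
by move=> lt; apply: eq_computable (computable_nth lt) => -[|a u] _ //=; rewrite nth_nil.
Qed.

Lemma computable_step_pred n (P : nat -> seq nat -> bool) :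
  computable n.+1 (fun u => P (head 0 u) (behead u)) ->
  computable n.+2 (fun u => P (nth 0 u 0) (drop 2 u)).
Proof.
move=> HP; have := @computable_comp_drop n 2 _ [:: fun u => nth 0 u 0] HP.
by rewrite addn2 => /(_ (conj (@computable_nth n.+2 0 isT) I)); apply: eq_computable.
Qed.

Lemma computable_iter n (phi : nat -> nat) f g :
  (forall m h, computable m h -> computable m (fun v => phi (h v))) ->
  computable n f -> computable n g -> computable n (fun v => iter (f v) phi (g v)).
Proof.
move=> Hphi; apply: (computable_comp2 (g := fun a b => iter a phi b)).
have := @computable_prec 1 (fun v => nth 0 v 0) (fun v => phi (nth 0 v 1))
  (@computable_nth 1 0 isT) (Hphi _ _ (@computable_nth 3 1 isT)).
by apply: eq_computable => -[|a [|b []]] //= _; elim: a => //= a ->.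
Qed.

Lemma iota_succr j : iota 0 j.+1 = rcons (iota 0 j) j.
Proof. by rewrite -cats1 -addn1 iotaD. Qed.

Lemma computable_find n (P : nat -> seq nat -> bool) L :
  computable n.+1 (fun u => P (head 0 u) (behead u)) -> computable n L ->
  computable n (fun v => find (P^~ v) (iota 0 (L v))).
Proof.
move=> HP; apply: (computable_cons (g := fun u => find (P^~ (behead u)) (iota 0 (head 0 u)))).
pose step u := if nth 0 u 1 < nth 0 u 0 then nth 0 u 1
               else if P (nth 0 u 0) (drop 2 u) then nth 0 u 0 else (nth 0 u 0).+1.
have Hstep : computable n.+2 step.
  apply: computable_if; first by apply: computable_ltn; apply: computable_nth.
    exact: computable_nth.
  apply: computable_if; first exact: computable_step_pred.
    exact: computable_nth.
  by apply: computable_succ; apply: computable_nth.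
apply: eq_computable (computable_prec (computable_const n 0) Hstep) => -[|j v] //= _.
elim: j => [|j IH] //; rewrite iota_succr /= IH /step /= drop0 -cats1 find_cat /=.
by rewrite has_find size_iota; case: ltnP => // _; case: (P j v); rewrite ?addn0 ?addn1.
Qed.

Lemma computable_all_iota n (P : nat -> seq nat -> bool) L :
  computable n.+1 (fun u => P (head 0 u) (behead u)) -> computable n L ->
  computable n (fun v => all (P^~ v) (iota 0 (L v))).
Proof.
move=> HP; apply: (computable_cons (g := fun u => all (P^~ (behead u)) (iota 0 (head 0 u)))).
have Hstep : computable n.+2 (fun u => (nth 0 u 1 != 0) && P (nth 0 u 0) (drop 2 u)).
  apply: computable_andb; last exact: computable_step_pred.
  by apply: computable_negb; apply: computable_eqn;
    [apply: computable_nth | apply: computable_const].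
apply: eq_computable (computable_prec (computable_const n 1) Hstep) => -[|j v] //= _.
elim: j => [|j IH] //; rewrite iota_succr /= IH drop0 all_rcons andbC.
by case: (all _ _).
Qed.

Lemma computable_all_seq n T (s : seq T) (P : T -> seq nat -> bool) :
  (forall x, computable n (P x)) -> computable n (fun v => all (P^~ v) s).
Proof.
move=> HP; elim: s => [|x s IH]; first exact: computable_const.
exact: computable_andb (HP x) IH.
Qed.

Lemma computable_mem n (L : seq nat) f :
  computable n f -> computable n (fun v => f v \in L).
Proof.
move=> Hf; elim: L => [|a L IH]; first exact: computable_const.
have := computable_orb (computable_eqn Hf (computable_const n a)) IH.
by apply: eq_computable => v _; rewrite in_cons.
Qed.

Lemma computable_search (check : nat -> nat -> bool) (verdict : nat -> bool) :
  computable 2 (fun v => check (nth 0 v 0) (nth 0 v 1)) ->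
  computable 1 (fun v => verdict (nth 0 v 0)) ->
  exists c, forall x (b : bool), (exists n, check n x) ->
    (forall n, check n x -> verdict n = b) -> eval c [:: x] b.
Proof.
move=> [cC HcC] [cV HcV].
have [cN HcN] := computable_negb (ex_intro _ cC HcC).
exists (Comp cV [:: Mu cN]) => x b ex_cert verdictP.
case: (ex_minnP ex_cert) => n cert_n min_n.
apply: (@ev_comp _ _ _ [:: n]); last by rewrite -(verdictP n cert_n); apply: (HcV [:: n]).
apply: evs_cons; last by constructor.
apply: ev_mu; first by have := HcN [:: n; x] erefl; rewrite /= cert_n.
move=> j lt_jn; exists 0; have := HcN [:: j; x] erefl => /=.
by case cert_j: (check j x) => //; have := min_n j cert_j; rewrite leqNgt lt_jn.
Qed.

Lemma computable_odd n f : computable n f -> computable n (fun v => odd (f v)).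
Proof.
apply: (computable_comp1 (g := fun a => nat_of_bool (odd a))).
have := @computable_prec 0 (fun _ => 0) (fun v => 1 - nth 0 v 1) (computable_const _ _)
  (computable_subn (computable_const _ _) (@computable_nth 2 1 isT)).
by apply: eq_computable => -[|a []] //= _; elim: a => //= a ->; case: (odd a).
Qed.

Lemma computable_half n f : computable n f -> computable n (fun v => (f v)./2).
Proof.
apply: (computable_comp1 (g := half)).
have := @computable_prec 0 (fun _ => 0) (fun v => nth 0 v 1 + odd (nth 0 v 0))
  (computable_const _ _)
  (computable_addn (@computable_nth 2 1 isT) (computable_odd (@computable_nth 2 0 isT))).
by apply: eq_computable => -[|a []] //= _; elim: a => //= a ->; rewrite uphalf_half addnC.
Qed.

Lemma computable_exp2 n f : computable n f -> computable n (fun v => 2 ^ (f v)).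
Proof.
apply: (computable_comp1 (g := fun a => 2 ^ a)).
have := @computable_prec 0 (fun _ => 1) (fun v => nth 0 v 1 + nth 0 v 1)
  (computable_const _ _)
  (computable_addn (@computable_nth 2 1 isT) (@computable_nth 2 1 isT)).
by apply: eq_computable => -[|a []] //= _; elim: a => //= a ->; rewrite expnS mul2n addnn.
Qed.

(** * Sequences coded by [CodeSeq] *)

Definition ccons (a x : nat) : nat := 2 ^ a * x.*2.+1.
Definition chead (x : nat) : nat := find (fun e => odd (iter e half x)) (iota 0 x).
Definition cbehead (x : nat) : nat := iter (chead x).+1 half x.

Lemma code_cons a s : CodeSeq.code (a :: s) = ccons a (CodeSeq.code s).
Proof. by []. Qed.

Lemma iter_half e x : iter e half x = x %/ 2 ^ e.
Proof. by elim: e => [|e IH] /=; rewrite ?divn1 // IH -divn2 -divnMA expnSr. Qed.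

Lemma chead_cons a x : chead (ccons a x) = a.
Proof.
rewrite /chead /ccons.
have lt_a : a < 2 ^ a * x.*2.+1.
  by apply: leq_trans (ltn_expl a (isT : 1 < 2)) _; rewrite leq_pmulr.
have -> : iota 0 (2 ^ a * x.*2.+1) = iota 0 a ++ iota a (2 ^ a * x.*2.+1 - a).
  by rewrite -{1}(subnKC (ltnW lt_a)) iotaD.
rewrite find_cat size_iota.
have -> : has (fun e => odd (iter e half (2 ^ a * x.*2.+1))) (iota 0 a) = false.
  apply/negbTE/hasPn => e; rewrite mem_iota add0n => /andP [_ lt_ea].
  rewrite iter_half (_ : 2 ^ a * _ = 2 ^ (a - e) * x.*2.+1 * 2 ^ e); last first.
    by rewrite mulnAC -expnD subnK // ltnW.
  by rewrite mulnK ?expn_gt0 // oddM oddX subn_eq0 leqNgt lt_ea.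
rewrite -(subnSK lt_a) /= iter_half mulKn ?expn_gt0 //.
by rewrite oddS odd_double addn0.
Qed.

Lemma cbehead_cons a x : cbehead (ccons a x) = x.
Proof.
rewrite /cbehead chead_cons iter_half expnSr divnMA /ccons mulKn ?expn_gt0 //.
by rewrite divn2 /= uphalf_double.
Qed.

Lemma cbehead0 : cbehead 0 = 0.
Proof. by rewrite /cbehead iter_half div0n. Qed.

Lemma cbehead_lt x : 0 < x -> cbehead x < x.
Proof.
move=> x_gt0; rewrite /cbehead iter_half ltn_Pdiv //.
by rewrite -[1]/(2 ^ 0) ltn_exp2l.
Qed.

Lemma decode_gt0 x :
  0 < x -> CodeSeq.decode x = chead x :: CodeSeq.decode (cbehead x).
Proof.
move=> x_gt0; have := CodeSeq.decodeK x.
case: (CodeSeq.decode x) => [|a s] x_code; first by rewrite -x_code in x_gt0.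
by rewrite -x_code code_cons chead_cons cbehead_cons CodeSeq.codeK.
Qed.

Lemma computable_chead n f : computable n f -> computable n (fun v => chead (f v)).
Proof.
apply: (computable_comp1 (g := chead)); rewrite /chead.
apply: (computable_find (P := fun e v => odd (iter e half (nth 0 v 0)))).
  apply: computable_odd; apply: computable_iter.
  - exact: computable_half.
  - exact: computable_head.
  - by apply: eq_computable (@computable_nth 2 1 isT) => -[|a [|b []]].
exact: computable_nth.
Qed.

Lemma computable_cbehead n f : computable n f -> computable n (fun v => cbehead (f v)).
Proof.
apply: (computable_comp1 (g := cbehead)); rewrite /cbehead.
apply: computable_iter; first exact: computable_half.
  by apply: computable_succ; apply: computable_chead; apply: computable_nth.
exact: computable_nth.
Qed.

Lemma computable_ccons n f g :
  computable n f -> computable n g -> computable n (fun v => ccons (f v) (g v)).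
Proof.
move=> Hf Hg; apply: computable_muln; first exact: computable_exp2.
by apply: computable_succ; apply: eq_computable (computable_addn Hg Hg) => v _; rewrite addnn.
Qed.

Lemma iter_cbehead_le j x : iter j cbehead x <= x - j.
Proof.
elim: j => [|j IH] /=; first by rewrite subn0.
case: (iter j cbehead x) IH => [|z] IH; first by rewrite cbehead0.
by rewrite subnS -ltnS (leq_trans (cbehead_lt _)) // (leq_trans IH) // leqSpred.
Qed.

Definition cfoldr (op : nat -> nat -> seq nat -> nat) (base : seq nat -> nat)
  (x : nat) (v : seq nat) : nat :=
  foldr (fun e acc => op e acc v) (base v) (CodeSeq.decode x).

(* The fold is computed from the right: after [j] steps the recursion has consumed
   the coded suffix [iter (x - j) cbehead x], which is the empty code for [j = 0]
   because the code [x] has at most [x] elements. *)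
Lemma computable_cfoldr n op base X :
  computable n.+2 (fun u => op (nth 0 u 0) (nth 0 u 1) (drop 2 u)) ->
  computable n base -> computable n X ->
  computable n (fun v => cfoldr op base (X v) v).
Proof.
move=> Hop Hb; apply: (computable_cons (g := fun u => cfoldr op base (head 0 u) (behead u))).
pose suffix (u : seq nat) := iter (nth 0 u 2 - (nth 0 u 0).+1) cbehead (nth 0 u 2).
have Hsuffix : computable n.+3 suffix.
  apply: computable_iter; first exact: computable_cbehead.
    by apply: computable_subn; [|apply: computable_succ]; apply: computable_nth.
  exact: computable_nth.
have Hb3 : computable n.+3 (fun u => base (drop 3 u)).
  by have := computable_drop 3 Hb; rewrite addn3.
have Hop3 : computable n.+3 (fun u => op (chead (suffix u)) (nth 0 u 1) (drop 3 u)).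
  have := @computable_comp_drop n 3 (fun u => op (nth 0 u 0) (nth 0 u 1) (drop 2 u))
    [:: fun u => chead (suffix u); fun u => nth 0 u 1] Hop.
  rewrite addn3; case; first by split; [apply: computable_chead | split; first exact: computable_nth].
  by move=> c Hc; apply: eq_computable (ex_intro _ c Hc) => u _ /=; rewrite drop0.
have Hb1 : computable n.+1 (fun u => base (behead u)).
  by have := computable_drop 1 Hb; rewrite addn1; apply: eq_computable => v _; rewrite drop1.
pose step u := if suffix u == 0 then base (drop 3 u)
               else op (chead (suffix u)) (nth 0 u 1) (drop 3 u).
have Hstep : computable n.+3 step.
  by apply: computable_if => //; apply: computable_eqn => //; apply: computable_const.
have := computable_cons (computable_prec Hb1 Hstep) (@computable_nth n.+1 0 isT).
apply: eq_computable => -[|x v] //= _.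
have inv j : j <= x -> prec (fun u => base (behead u)) step j (x :: v) =
    foldr (fun e acc => op e acc v) (base v) (CodeSeq.decode (iter (x - j) cbehead x)).
  elim: j => [|j IH] le_jx /=.
    by rewrite subn0; have := iter_cbehead_le x x; rewrite subnn leqn0 => /eqP ->.
  rewrite IH ?(ltnW le_jx) // /step /suffix /= drop0.
  case: eqP => [-> //|/eqP sfx_neq0].
  by rewrite (@decode_gt0 (iter (x - j.+1) cbehead x)) ?lt0n //= -iterS -subSn.
by rewrite inv // subnn.
Qed.

Definition ccat (x y : nat) : nat :=
  CodeSeq.code (CodeSeq.decode x ++ CodeSeq.decode y).
Definition cnth (j x : nat) : nat := chead (iter j cbehead x).

Lemma decode_ccat x y :
  CodeSeq.decode (ccat x y) = CodeSeq.decode x ++ CodeSeq.decode y.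
Proof. exact: CodeSeq.codeK. Qed.

Lemma ccatE x y : ccat x y = foldr ccons y (CodeSeq.decode x).
Proof.
rewrite /ccat; elim: (CodeSeq.decode x) => [|a s IH] /=; last by rewrite -IH.
exact: CodeSeq.decodeK.
Qed.

Lemma computable_ccat n f g :
  computable n f -> computable n g -> computable n (fun v => ccat (f v) (g v)).
Proof.
move=> Hf Hg; have := @computable_cfoldr n (fun e acc _ => ccons e acc) g f.
case=> //; first by apply: computable_ccons; apply: computable_nth.
by move=> c Hc; exists c => v sv; rewrite ccatE; apply: Hc.
Qed.

Lemma iter_cbehead_code j s : iter j cbehead (CodeSeq.code s) = CodeSeq.code (drop j s).
Proof.
elim: j => [|j IH] /=; first by rewrite drop0.
rewrite IH; case: (ltnP j (size s)) => [lt_js|le_sj].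
  by rewrite (drop_nth 0 lt_js) code_cons cbehead_cons.
by rewrite !drop_oversize ?(leq_trans le_sj) // cbehead0.
Qed.

Lemma cnth_code j s : cnth j (CodeSeq.code s) = nth 0 s j.
Proof.
rewrite /cnth iter_cbehead_code; case: (ltnP j (size s)) => [lt_js|le_sj].
  by rewrite (drop_nth 0 lt_js) code_cons chead_cons.
by rewrite drop_oversize // nth_default.
Qed.

Lemma computable_cnth n f g :
  computable n f -> computable n g -> computable n (fun v => cnth (f v) (g v)).
Proof.
move=> Hf Hg; apply: computable_chead.
by apply: computable_iter => //; exact: computable_cbehead.
Qed.

Lemma computable_all_decode n (P : nat -> seq nat -> bool) X :
  computable n.+1 (fun u => P (head 0 u) (behead u)) -> computable n X ->
  computable n (fun v => all (P^~ v) (CodeSeq.decode (X v))).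
Proof.
move=> HP HX.
have := @computable_cfoldr n (fun e acc v => P e v && (acc != 0)) (fun _ => true) X.
case=> //; last first.
  move=> c Hc; apply: eq_computable (ex_intro _ c Hc) => v _.
  by rewrite /cfoldr; elim: (CodeSeq.decode _) => //= a s ->; case: (all _ _); case: (P a v).
- exact: computable_const.
- apply: computable_andb; first exact: computable_step_pred.
  by apply: computable_negb; apply: computable_eqn;
    [apply: computable_nth | apply: computable_const].
Qed.

(** * Evaluation with a step bound *)

Definition eventually (P : nat -> Prop) := exists t0, forall t, t0 <= t -> P t.

Lemma eventually_and (P Q : nat -> Prop) :
  eventually P -> eventually Q -> eventually (fun t => P t /\ Q t).
Proof.
move=> [t1 H1] [t2 H2]; exists (maxn t1 t2) => t.
by rewrite geq_max => /andP [l1 l2]; split; [apply: H1 | apply: H2].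
Qed.

Lemma eventually_forall_in (T : eqType) (s : seq T) (P : T -> nat -> Prop) :
  (forall x, x \in s -> eventually (P x)) ->
  eventually (fun t => forall x, x \in s -> P x t).
Proof.
elim: s => [|y s IH] Ps; first by exists 0.
have [|t0 H] := eventually_and (Ps y (mem_head y s)) (IH _).
  by move=> x xs; apply: Ps; rewrite in_cons xs orbT.
by exists t0 => t /H [Py Ps'] x; rewrite in_cons => /orP [/eqP -> | /Ps'].
Qed.

(* Results are shifted by one: [0] means "no result within the step bound". *)
Fixpoint bprec (F0 FS : seq nat -> nat) (j : nat) (v : seq nat) : nat :=
  if j is j'.+1 then
    let z := bprec F0 FS j' v in if z == 0 then 0 else FS (j' :: z.-1 :: v)
  else F0 v.

(* [bmu F t v] scans [F (j :: v)] for [j < t]: it returns [j.+2] for the first [j]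
   with [F (j :: v) = 1] (a zero value), [1] if a failure [0] comes first, and [0]
   if the scan is inconclusive. *)
Fixpoint bmu (F : seq nat -> nat) (t : nat) (v : seq nat) : nat :=
  if t is j.+1 then
    let q := bmu F j v in
    if q != 0 then q else
    let r := F (j :: v) in if r == 0 then 1 else if r == 1 then j.+2 else 0
  else 0.

(* [beval a c t v] evaluates [c] on [v] with step bound [t]; the arity [a] stands
   for [size v], so that the side conditions of [Succ] and [Proj] do not inspect
   [v] and [beval a c] is computable on arguments of length [a.+1]. *)
Fixpoint beval (a : nat) (c : code) (t : nat) (v : seq nat) {struct c} : nat :=
  match c with
  | Zero => 1
  | Succ => if a is _.+1 then (head 0 v).+2 else 0
  | Proj i => if i < a then (nth 0 v i).+1 else 0
  | Comp f gs =>
      let ws := map (fun g => beval a g t v) gs in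
      if all (fun w => 0 < w) ws then beval (size gs) f t (map predn ws) else 0
  | Prim f g =>
      if a is a'.+1 then
        bprec (fun w => beval a' f t w) (fun w => beval a.+1 g t w) (head 0 v) (behead v)
      else 0
  | Mu f => let q := bmu (fun w => beval a.+1 f t w) t v in if 1 < q then q.-1 else 0
  end.

Definition code_nested_ind (P : code -> Prop) (HZ : P Zero) (HS : P Succ)
  (HP : forall i, P (Proj i))
  (HC : forall f gs, P f -> foldr (fun g Q => P g /\ Q) True gs -> P (Comp f gs))
  (HPr : forall f g, P f -> P g -> P (Prim f g))
  (HM : forall f, P f -> P (Mu f)) : forall c, P c :=
  fix F c := match c with
  | Zero => HZ | Succ => HS | Proj i => HP i
  | Comp f gs => HC f gs (F f)
      ((fix G gs : foldr (fun g Q => P g /\ Q) True gs :=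
         match gs with [::] => I | g :: gs' => conj (F g) (G gs') end) gs)
  | Prim f g => HPr f g (F f) (F g)
  | Mu f => HM f (F f)
  end.

Lemma bmu_undecided F v n j :
  (forall m, m < n -> 1 < F (m :: v)) -> j <= n -> bmu F j v = 0.
Proof.
move=> Fgt1; elim: j => [|j IH] le_jn //=.
by rewrite IH ?(ltnW le_jn) //=; have := Fgt1 j le_jn; case: (F _) => [|[|k]].
Qed.

Lemma bmu_found F t v n : bmu F t v = n.+2 ->
  F (n :: v) = 1 /\ forall m, m < n -> 1 < F (m :: v).
Proof.
elim: t => [|t IH] //=.
case: eqP => [q0|/eqP qn0 /IH //].
case: eqP => [_ [] //|Fn1].
case: eqP => [Ft1 [<-]|]; last by case: (F _) => [|[]].
split => // m lt_mt.
suff Fgt1 j : j <= t -> bmu F j v = 0 -> forall m, m < j -> 1 < F (m :: v).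
  exact: Fgt1 (leqnn t) q0 m lt_mt.
elim: j => [|j IHj] // le_jt /=.
case: eqP => [q0'|/eqP //] /= Fj m'.
rewrite ltnS leq_eqVlt => /orP [/eqP ->|]; last exact: IHj (ltnW le_jt) q0' m'.
by move: Fj; case: (F _) => [|[|k]].
Qed.

Lemma bmu_hit F v n t : F (n :: v) = 1 -> (forall m, m < n -> 1 < F (m :: v)) ->
  n < t -> bmu F t v = n.+2.
Proof.
move=> Fn1 Fgt1; elim: t => [|t IH] //; rewrite ltnS leq_eqVlt => /orP [/eqP <-|lt_nt] /=.
  by rewrite (bmu_undecided Fgt1 (leqnn n)) /= Fn1.
by rewrite IH.
Qed.

Lemma beval_sound c a t v y : size v = a -> beval a c t v = y.+1 -> eval c v y.
Proof.
elim/code_nested_ind: c a t v y => [||i|f gs IHf IHgs|f g IHf IHg|f IHf] a t v y sv /=.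
- by case=> <-; constructor.
- by case: a sv => // a; case: v => //= x v _ [<-]; constructor.
- by rewrite -sv; case: ltnP => // lt_iv [<-]; constructor.
- case: ifP => // all_gt0 Hf.
  apply: ev_comp (IHf _ _ _ _ _ Hf); last by rewrite !size_map.
  elim: gs IHgs all_gt0 {Hf} => [|g gs IH] /=; first by constructor.
  case=> Hg Hgs /andP [g_gt0 gs_gt0]; constructor; last exact: IH.
  by apply: (Hg a t) => //; rewrite prednK.
- case: a sv => // a; case: v => //= n v [sv].
  elim: n y => [|n IH] y /=; first by move=> Hf; constructor; exact: IHf Hf.
  case: eqP => // /eqP z_neq0 Hg; apply: ev_primS (IH _ _) (IHg _ _ _ _ _ Hg) => //.
    by rewrite prednK // lt0n.
  by rewrite /= sv.
- case: ifP => // lt1q.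
  have [n Hn] : exists n, bmu (fun w => beval a.+1 f t w) t v = n.+2.
    by move: lt1q; case: (bmu _ _ _) => [|[|n]] //; exists n.
  rewrite Hn /= => -[<-]; have [H0 H1] := bmu_found Hn.
  apply: ev_mu; first by apply: (IHf a.+1 t); rewrite /= ?sv.
  move=> m /H1; case E: (beval _ _ _ _) => [|[|k]] // _; exists k.
  by apply: (IHf a.+1 t); rewrite /= ?sv.
Qed.

Lemma evals_size gs v ws : evals gs v ws -> size ws = size gs.
Proof. by elim=> //= g gs' v' y ys _ _ ->. Qed.

Lemma bmu_eventually (F : nat -> seq nat -> nat) v n :
  eventually (fun t => F t (n :: v) = 1) ->
  (forall m, m < n -> eventually (fun t => 1 < F t (m :: v))) ->
  eventually (fun t => bmu (F t) t v = n.+2).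
Proof.
move=> Hn Hlt.
have Hlt' : forall m, m \in iota 0 n -> eventually (fun t => 1 < F t (m :: v)).
  by move=> m; rewrite mem_iota => /Hlt.
have [t0 Ht0] := eventually_and Hn (eventually_forall_in Hlt').
exists (maxn t0 n.+1) => t; rewrite geq_max => /andP [/Ht0 [Fn1 Fgt1] lt_nt].
by apply: bmu_hit => // m lt_mn; apply: Fgt1; rewrite mem_iota.
Qed.

Fixpoint beval_complete c v y (H : eval c v y) {struct H} :
  eventually (fun t => beval (size v) c t v = y.+1)
with bevals_complete gs v ws (H : evals gs v ws) {struct H} :
  eventually (fun t => map (fun g => beval (size v) g t v) gs = map succn ws).
Proof.
- destruct H as [v|x v|i v lt_iv|f gs v ws y Hs Hf|f g v y Hf|f g n v z y Hp Hg|f v n H0 H1].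
  + by exists 0.
  + by exists 0.
  + by exists 0 => t _ /=; rewrite lt_iv.
  + have [t0 Ht0] := eventually_and (bevals_complete _ _ _ Hs) (beval_complete _ _ _ Hf).
    exists t0 => t /Ht0 [Hgs Hft] /=; rewrite Hgs all_map.
    have -> : all (fun w => 0 < w.+1) ws by apply/allP.
    by rewrite -map_comp map_id -(evals_size Hs).
  + by have [t0 Ht0] := beval_complete _ _ _ Hf; exists t0 => t /Ht0 /= ->.
  + have [t0 Ht0] := eventually_and (beval_complete _ _ _ Hp) (beval_complete _ _ _ Hg).
    by exists t0 => t /Ht0 [/= -> /= ->].
  + have Hlt m : m < n -> eventually (fun t => 1 < beval (size v).+1 f t (m :: v)).
      move=> /H1 [k /beval_complete [t0 Ht0]].
      by exists t0 => t /Ht0 /= ->.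
    have [t0 Ht0] := bmu_eventually (beval_complete _ _ _ H0) Hlt.
    by exists t0 => t /Ht0 /= ->.
- destruct H as [v|g gs v y ys Hg Hs]; first by exists 0.
  have [t0 Ht0] := eventually_and (beval_complete _ _ _ Hg) (bevals_complete _ _ _ Hs).
  by exists t0 => t /Ht0 [/= -> ->].
Qed.

Lemma eval_det c v y y' : eval c v y -> eval c v y' -> y = y'.
Proof.
move=> /beval_complete [t1 H1] /beval_complete [t2 H2].
by have := H1 _ (leq_maxl t1 t2); rewrite H2 ?leq_maxr // => -[].
Qed.

Definition beval_computable c :=
  forall a, computable a.+1 (fun u => beval a c (head 0 u) (behead u)).

Lemma beval_computable_Comp f gs : beval_computable f ->
  foldr (fun g P => beval_computable g /\ P) True gs -> beval_computable (Comp f gs).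
Proof.
move=> IHf IHgs a.
have Hall : computable a.+1
    (fun u => all (fun w => 0 < w) [seq beval a g (head 0 u) (behead u) | g <- gs]).
  elim: gs IHgs => [|g gs IH] /=; first by move=> _; exact: computable_const.
  case=> Hg /IH Hgs; apply: computable_andb => //.
  by apply: computable_ltn; [apply: computable_const | apply: Hg].
have Hval : computable a.+1 (fun u => beval (size gs) f (head 0 u)
    (map predn [seq beval a g (head 0 u) (behead u) | g <- gs])).
  have := @computable_comp a.+1 (fun w => beval (size gs) f (head 0 w) (behead w))
    ((fun u => head 0 u) ::
     [seq (fun u => (beval a g (head 0 u) (behead u)).-1) | g <- gs]).
  rewrite /= size_map => /(_ (IHf _)); case.
    split; first exact: computable_head.
    elim: gs IHgs {Hall} => [|g gs IH] // [Hg /IH Hgs].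
    by split => //; apply: computable_predn.
  move=> c Hc; apply: eq_computable (ex_intro _ c Hc) => u _ /=.
  by rewrite -!map_comp.
exact: computable_if Hall Hval (computable_const _ 0).
Qed.

Lemma beval_computable_Prim f g :
  beval_computable f -> beval_computable g -> beval_computable (Prim f g).
Proof.
move=> IHf IHg [|a].
  by apply: eq_computable (computable_const 1 0) => -[|t []].
pose step u := if nth 0 u 1 == 0 then 0 else
  beval a.+2 g (nth 0 u 2) (nth 0 u 0 :: (nth 0 u 1).-1 :: drop 3 u).
have Hstep : computable a.+3 step.
  apply: computable_ifz; [exact: computable_nth | exact: computable_const |].
  have := @computable_comp_drop a 3 (fun w => beval a.+2 g (head 0 w) (behead w))
    [:: fun u => nth 0 u 2; fun u => nth 0 u 0; fun u => (nth 0 u 1).-1] (IHg _).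
  rewrite addn3; case; last by move=> c Hc; apply: eq_computable (ex_intro _ c Hc).
  do 2 (split; first exact: computable_nth).
  by split => //; apply: computable_predn; apply: computable_nth.
have := @computable_comp_drop a 2 _ [:: fun u => nth 0 u 1; fun u => nth 0 u 0]
  (computable_prec (IHf a) Hstep).
rewrite addn2; case; first by do 2 (split; first exact: computable_nth).
move=> c Hc; apply: eq_computable (ex_intro _ c Hc) => -[|t [|n p]] //= _.
by rewrite drop0; elim: n => [|n IH] //=; rewrite IH /step /= drop0.
Qed.

Lemma beval_computable_Mu f : beval_computable f -> beval_computable (Mu f).
Proof.
move=> IHf a.
have Hf : computable a.+3 (fun u => beval a.+1 f (nth 0 u 2) (nth 0 u 0 :: drop 3 u)).
  have := @computable_comp_drop a 3 (fun w => beval a.+1 f (head 0 w) (behead w))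
    [:: fun u => nth 0 u 2; fun u => nth 0 u 0] (IHf _).
  rewrite addn3; case; first by do 2 (split; first exact: computable_nth).
  by move=> c Hc; apply: eq_computable (ex_intro _ c Hc).
pose step u := if nth 0 u 1 != 0 then nth 0 u 1 else
  if beval a.+1 f (nth 0 u 2) (nth 0 u 0 :: drop 3 u) == 0 then 1 else
  if beval a.+1 f (nth 0 u 2) (nth 0 u 0 :: drop 3 u) == 1 then (nth 0 u 0).+2 else 0.
have Hstep : computable a.+3 step.
  apply: computable_if; first by apply: computable_negb; apply: computable_eqn;
    [apply: computable_nth | apply: computable_const].
    exact: computable_nth.
  apply: computable_if; first by apply: computable_eqn => //; apply: computable_const.
    exact: computable_const.
  apply: computable_if; first by apply: computable_eqn => //; apply: computable_const.
    by do 2 apply: computable_succ; apply: computable_nth.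
  exact: computable_const.
have Hq := computable_cons (computable_prec (computable_const a.+1 0) Hstep)
  (@computable_nth a.+1 0 isT).
have := computable_if (computable_ltn (computable_const _ 1) Hq)
  (computable_predn Hq) (computable_const _ 0).
apply: eq_computable => -[|t v] //= _.
suff -> j : prec (fun _ => 0) step j (t :: v) = bmu (fun w => beval a.+1 f t w) j v by [].
by elim: j => [|j IH] //=; rewrite IH /step /= drop0.
Qed.

Lemma computable_beval c : beval_computable c.
Proof.
elim/code_nested_ind: c => [||i|f gs|f g|f]; last 3 first.
- exact: beval_computable_Comp.
- exact: beval_computable_Prim.
- exact: beval_computable_Mu.
- by move=> a; exact: computable_const.
- case=> [|a]; first by apply: eq_computable (computable_const 1 0) => -[|t []].
  have := computable_succ (computable_succ (@computable_nth a.+2 1 isT)).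
  by apply: eq_computable => -[|t [|x v]].
move=> a; case: (ltnP i a) => [lt_ia|le_ai].
  have := computable_succ (@computable_nth a.+1 i.+1 lt_ia).
  by apply: eq_computable => -[|t v] //= _; rewrite lt_ia.
apply: eq_computable (computable_const a.+1 0) => -[|t v] //= _.
by rewrite ltnNge le_ai.
Qed.

(** * Groups and words *)

Section GroupFacts.
Variable G : group.
Implicit Types x y z : G.

Lemma gmulgV x : gmul x (ginv x) = gone G.
Proof.
rewrite -[gmul x _]gmul1 -(gmulV (ginv x)) -gmulA [gmul (ginv x) (gmul x _)]gmulA.
by rewrite gmulV gmul1 gmulV.
Qed.

Lemma gmulg1 x : gmul x (gone G) = x.
Proof. by rewrite -(gmulV x) gmulA gmulgV gmul1. Qed.

Lemma gmulI x y z : gmul x y = gmul x z -> y = z.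
Proof. by move=> E; rewrite -(gmul1 y) -(gmulV x) -gmulA E gmulA gmulV gmul1. Qed.

Lemma ginv_unique x y : gmul x y = gone G -> y = ginv x.
Proof. by move=> E; apply: (@gmulI x); rewrite E gmulgV. Qed.

End GroupFacts.

Lemma hom1 (H G : group) (f : H -> G) : is_hom f -> f (gone H) = gone G.
Proof. by move=> hom_f; apply: (@gmulI _ (f (gone H))); rewrite -hom_f gmul1 gmulg1. Qed.

Lemma homV (H G : group) (f : H -> G) x : is_hom f -> f (ginv x) = ginv (f x).
Proof. by move=> hom_f; apply: ginv_unique; rewrite -hom_f gmulgV hom1. Qed.

Section Words.
Variables (G : group) (A : Type).
Implicit Types (e : A -> G) (s t : word A).

Lemma eq_eval_word e e' s : e =1 e' -> eval_word e s = eval_word e' s.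
Proof. by move=> E; elim: s => //= l s ->; rewrite /eval_letter E. Qed.

Lemma eval_word_cat e s t : eval_word e (s ++ t) = gmul (eval_word e s) (eval_word e t).
Proof. by elim: s => [|l s IH] /=; rewrite ?gmul1 // IH gmulA. Qed.

Lemma eval_word_hom (H : group) (f : G -> H) e s : is_hom f ->
  f (eval_word e s) = eval_word (fun a => f (e a)) s.
Proof.
move=> hom_f; elim: s => [|l s IH] /=; first exact: hom1.
by rewrite hom_f IH /eval_letter; case: l.2; rewrite ?homV.
Qed.

Lemma eval_word_pair e a : eval_word e [:: a; inv_letter a] = gone G.
Proof. by rewrite /= /eval_letter /= gmulg1; case: a.2; rewrite /= ?gmulV ?gmulgV. Qed.

Lemma eval_word_insert e u v X : eval_word e X = gone G ->
  eval_word e (u ++ X ++ v) = eval_word e (u ++ v).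
Proof. by move=> X1; rewrite !eval_word_cat X1 gmul1. Qed.

End Words.

Lemma trivial_in_eval (G : group) k (R : word 'I_k -> Prop) (g : 'I_k -> G) :
  (forall r, R r -> eval_word g r = gone G) ->
  forall w, trivial_in R w -> eval_word g w = gone G.
Proof.
move=> gR w; elim => // u v.
- by move=> a _ IH; rewrite eval_word_insert ?eval_word_pair.
- by move=> a _ IH; rewrite -IH eval_word_insert ?eval_word_pair.
- by move=> r Rr _ IH; rewrite eval_word_insert // gR.
- by move=> r Rr _ IH; rewrite -IH eval_word_insert // gR.
Qed.

Lemma trivial_in_relator k (R : word 'I_k -> Prop) r : R r -> trivial_in R r.
Proof.
by move=> Rr; have := tr_ins_rel (u := [::]) (v := [::]) Rr (@tr_nil _ R); rewrite /= cats0.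
Qed.

Definition subst_word k m (U U' : 'I_k -> word 'I_m) (w : word 'I_k) : word 'I_m :=
  flatten (map (fun l => if l.2 then U' l.1 else U l.1) w).

Lemma eval_subst_word (G : group) k m (gen : 'I_m -> G) (U U' : 'I_k -> word 'I_m) w :
  (forall i, eval_word gen (U' i) = ginv (eval_word gen (U i))) ->
  eval_word gen (subst_word U U' w) = eval_word (fun i => eval_word gen (U i)) w.
Proof.
move=> UU'; rewrite /subst_word; elim: w => [|l w IH] //=.
by rewrite eval_word_cat IH /eval_letter; case: l.2; rewrite ?UU'.
Qed.

Definition relator_equation (G : group) k (r : word 'I_k) : equation G k :=
  map (fun l => ((inr l.1 : (G + 'I_k)%type), l.2)) r.

Lemma eval_relator_equation (G : group) k (g : 'I_k -> G) r :
  eval_word (subst g) (relator_equation G r) = eval_word g r.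
Proof. by elim: r => //= l r ->. Qed.

Lemma noetherian_finite_relators (G : group) k (R : word 'I_k -> Prop) :
  equationally_noetherian G ->
  exists R0 : seq (word 'I_k), (forall r, r \in R0 -> R r) /\
    forall g : 'I_k -> G, (forall r, r \in R0 -> eval_word g r = gone G) ->
      forall r, R r -> eval_word g r = gone G.
Proof.
move=> EN; pose Sigma s := exists2 r, R r & s = relator_equation G r.
have [Sigma0 [Sigma0_sub Sigma0_equiv]] := EN k Sigma.
suff [R0 [R0_sub R0_Sigma0]] : exists R0 : seq (word 'I_k), (forall r, r \in R0 -> R r) /\
    forall g, (forall r, r \in R0 -> eval_word g r = gone G) -> solves (fun s => inl_ s Sigma0) g.
  exists R0; split=> // g /R0_Sigma0 /Sigma0_equiv g_sol r Rr.
  by rewrite -eval_relator_equation; apply: g_sol; exists r.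
elim: Sigma0 Sigma0_sub {Sigma0_equiv} => [_|s0 S IH sub]; first by exists [::]; split=> // g _ s.
have [|R0 [R0_sub R0_S]] := IH; first by move=> s Ss; apply: sub; right.
have [r0 Rr0 ->] := sub s0 (or_introl erefl).
exists (r0 :: R0); split=> [r|g g1 s].
  by rewrite in_cons => /orP [/eqP -> //|/R0_sub].
case=> [<-|Ss]; first by rewrite eval_relator_equation; apply: g1; rewrite mem_head.
by apply: R0_S => // r rR0; apply: g1; rewrite in_cons rR0 orbT.
Qed.

Definition run1 (c : code) (t y : nat) : nat := beval 1 c t [:: y].

Lemma run1_sound c t y z : run1 c t y = z.+1 -> eval c [:: y] z.
Proof. exact: beval_sound. Qed.

Lemma run1_complete c y z : eval c [:: y] z -> eventually (fun t => run1 c t y = z.+1).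
Proof. exact: beval_complete. Qed.

Lemma computable_run1 c n f g :
  computable n f -> computable n g -> computable n (fun v => run1 c (f v) (g v)).
Proof.
apply: (computable_comp2 (g := run1 c)).
by apply: eq_computable (computable_beval c 1) => -[|t [|y []]].
Qed.

(** * Codes of words *)

Definition letters n : seq ('I_n * bool) := enum {: 'I_n * bool}.

Definition is_word_code n x :=
  all (fun e => e \in map pickle (letters n)) (CodeSeq.decode x).

Lemma decode_pickle n (s : word 'I_n) : CodeSeq.decode (pickle s) = map pickle s.
Proof. exact: CodeSeq.codeK. Qed.

Lemma ccat_pickle n (s t : word 'I_n) : ccat (pickle s) (pickle t) = pickle (s ++ t).
Proof. by rewrite /ccat !decode_pickle -map_cat. Qed.

Lemma is_word_code_pickle n (s : word 'I_n) : is_word_code n (pickle s).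
Proof.
rewrite /is_word_code decode_pickle all_map; apply/allP => l _ /=.
by rewrite map_f // mem_enum.
Qed.

Lemma is_word_codeP n x : is_word_code n x -> exists s : word 'I_n, pickle s = x.
Proof.
rewrite /is_word_code => x_word; suff [s s_x] : exists s : word 'I_n, map pickle s = CodeSeq.decode x.
  by exists s; rewrite -[x]CodeSeq.decodeK -s_x.
elim: (CodeSeq.decode x) x_word => [|e es IH] /=; first by exists [::].
by case/andP=> /mapP [l _ ->] /IH [s <-]; exists (l :: s).
Qed.

Lemma map_pickle_inj n : injective (map (pickle : 'I_n * bool -> nat)).
Proof. exact/inj_map/(pcan_inj pickleK). Qed.

Lemma map_pickle_cat n (s : word 'I_n) a b : map pickle s = a ++ b ->
  exists s1 s2, [/\ s = s1 ++ s2, map pickle s1 = a & map pickle s2 = b].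
Proof.
move=> E; exists (take (size a) s), (drop (size a) s); rewrite cat_take_drop.
by rewrite map_take map_drop E take_size_cat // drop_size_cat.
Qed.

Lemma computable_is_word_code k n f :
  computable n f -> computable n (fun v => is_word_code k (f v)).
Proof.
move=> Hf; apply: (computable_all_decode (P := fun e _ => e \in map pickle (letters k))) => //.
exact: computable_mem (computable_head _).
Qed.

Definition csubst_letter k (e PS QS : nat) : nat :=
  foldr (fun (l : 'I_k * bool) acc =>
    if e == pickle l then (if l.2 then cnth l.1 QS else cnth l.1 PS) else acc) 0 (letters k).

Definition csubst k (x PS QS : nat) : nat :=
  foldr (fun e acc => ccat (csubst_letter k e PS QS) acc) 0 (CodeSeq.decode x).

Lemma csubst_letter_pickle k (l : 'I_k * bool) PS QS :
  csubst_letter k (pickle l) PS QS = if l.2 then cnth l.1 QS else cnth l.1 PS.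
Proof.
rewrite /csubst_letter; have : l \in letters k by rewrite mem_enum.
elim: (letters k) => [|l' L IH] //=; rewrite in_cons => /orP [/eqP <-|lL].
  by rewrite eqxx.
by case: eqP => [/(pcan_inj pickleK) -> //|_]; apply: IH.
Qed.

Lemma csubst_pickle k m (U U' : 'I_k -> word 'I_m) PS QS (w : word 'I_k) :
  (forall i : 'I_k, cnth i PS = pickle (U i)) ->
  (forall i : 'I_k, cnth i QS = pickle (U' i)) ->
  csubst k (pickle w) PS QS = pickle (subst_word U U' w).
Proof.
move=> PS_U QS_U'; rewrite /csubst decode_pickle /subst_word.
elim: w => [|l w IH] //=; rewrite IH csubst_letter_pickle -ccat_pickle.
by case: l.2; rewrite ?PS_U ?QS_U'.
Qed.

Lemma computable_csubst k n X PS QS :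
  computable n X -> computable n PS -> computable n QS ->
  computable n (fun v => csubst k (X v) (PS v) (QS v)).
Proof.
move=> HX HP HQ.
have := @computable_cfoldr n (fun e acc v => ccat (csubst_letter k e (PS v) (QS v)) acc)
  (fun _ => 0) X; case=> //; [|exact: computable_const|].
  apply: computable_ccat; last exact: computable_nth.
  have HP2 := computable_drop 2 HP; have HQ2 := computable_drop 2 HQ.
  rewrite addn2 in HP2 HQ2; rewrite /csubst_letter.
  elim: (letters k) => [|l L IH] /=; first exact: computable_const.
  apply: computable_if => //; first by apply: computable_eqn;
    [apply: computable_nth | apply: computable_const].
  by case: l.2; apply: computable_cnth => //; apply: computable_const.
by move=> c Hc; apply: eq_computable (ex_intro _ c Hc).
Qed.

(** * Certificates for the word problem *)

Definition pair_codes k : seq nat := [seq pickle [:: l; inv_letter l] | l <- letters k].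

Definition admissible k (cR : code) (X t : nat) : bool :=
  (X \in pair_codes k) || (run1 cR t X != 0).

(* The step coded by [s = [:: u; v; X; t; d]] inserts [X] between [u] and [v]
   ([d = 0]) or deletes it ([d != 0]); [X] must be a cancelling pair or a relator
   on which the enumeration [cR] halts within [t] steps. *)
Definition derivation_step k (cR : code) (z z' s : nat) : bool :=
  let u := cnth 0 s in let v := cnth 1 s in let X := cnth 2 s in
  [&& is_word_code k X, admissible k cR X (cnth 3 s) &
   if cnth 4 s == 0 then (z == ccat u v) && (z' == ccat u (ccat X v))
   else (z' == ccat u v) && (z == ccat u (ccat X v))].

(* [D] codes [[:: 0; L; zs; ss]]: a derivation [[::] = z_0, ..., z_L = x] of [x]
   from the empty word, with steps [ss]. *)
Definition derivation_cert k (cR : code) (x D : nat) : bool :=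
  let L := cnth 1 D in let zs := cnth 2 D in let ss := cnth 3 D in
  [&& cnth 0 zs == 0, cnth L zs == x &
   all (fun j => derivation_step k cR (cnth j zs) (cnth j.+1 zs) (cnth j ss)) (iota 0 L)].

(* [D] codes [[:: tag; PS; QS; t]] with [tag != 0]: words [P_i] and [Q_i = P_i^-1]
   over the generators of [G], the images of the letters [x_i] and [x_i^-1] under an
   assignment that satisfies [R0] and does not kill [x]; [cG] decides each of these
   identities within [t] steps, answering [0] (coded [1]) for trivial words and [1]
   (coded [2]) for the others. *)
Definition separation_cert k m (cG : code) (R0 : seq (word 'I_k)) (x D : nat) : bool :=
  let PS := cnth 1 D in let QS := cnth 2 D in let t := cnth 3 D in
  [&& all (fun i => [&& is_word_code m (cnth i PS), is_word_code m (cnth i QS) &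
        run1 cG t (ccat (cnth i PS) (cnth i QS)) == 1]) (iota 0 k),
      all (fun r => run1 cG t (csubst k (pickle r) PS QS) == 1) R0 &
      run1 cG t (csubst k x PS QS) == 2].
Arguments separation_cert : clear implicits.

Definition wp_cert k m cG cR R0 (D x : nat) : bool :=
  if cnth 0 D == 0 then derivation_cert k cR x D else separation_cert k m cG R0 x D.
Arguments wp_cert : clear implicits.

Ltac computable_step := match goal with
  | |- computable _ _ => first
  [ assumption
  | apply: computable_const
  | (apply: computable_nth; done)
  | apply: computable_head
  | (apply: computable_nth_behead; done)
  | apply: computable_andb | apply: computable_negb
  | apply: computable_eqn
  | apply: computable_cnth | apply: computable_ccat | apply: computable_is_word_code
  | apply: computable_csubst | apply: computable_run1 | apply: computable_mem
  | apply: computable_succ | apply: computable_ifb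
  | match goal with
    | |- computable _ (fun x => nat_of_bool (@?b x)) => fail 1
    | _ => apply: computable_if end ] end.

Ltac computable_tac := repeat computable_step.

Lemma computable_derivation_step k cR n z z' s :
  computable n z -> computable n z' -> computable n s ->
  computable n (fun w => derivation_step k cR (z w) (z' w) (s w)).
Proof. by move=> *; rewrite /derivation_step /admissible; computable_tac. Qed.

Lemma computable_wp_cert k m cG cR R0 :
  computable 2 (fun v => wp_cert k m cG cR R0 (nth 0 v 0) (nth 0 v 1)).
Proof.
rewrite /wp_cert /derivation_cert /separation_cert; computable_tac.
- by apply: computable_all_iota; computable_tac; apply: computable_derivation_step; computable_tac.
- by apply: computable_all_iota; computable_tac.
- by apply: computable_all_seq => r; computable_tac.
Qed.

Section Derivations.
Variables (k : nat) (R : word 'I_k -> Prop) (cR : code).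
Hypothesis cR_enum : forall w, R w <-> exists y, eval cR [:: pickle w] y.

Lemma admissible_sound (X : word 'I_k) t : admissible k cR (pickle X) t ->
  (forall u v, trivial_in R (u ++ v) -> trivial_in R (u ++ X ++ v)) /\
  (forall u v, trivial_in R (u ++ X ++ v) -> trivial_in R (u ++ v)).
Proof.
case/orP=> [/mapP [a _ /(pcan_inj pickleK) ->]|].
  by split=> u v; [apply: tr_ins_pair | apply: tr_del_pair].
case E: (run1 cR t _) => [|y] // _.
have RX : R X by apply/cR_enum; exists y; apply: run1_sound E.
by split=> u v; [apply: tr_ins_rel | apply: tr_del_rel].
Qed.

Lemma derivation_step_sound (s : word 'I_k) z' st :
  trivial_in R s -> derivation_step k cR (pickle s) z' st ->
  exists2 s', pickle s' = z' & trivial_in R s'.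
Proof.
rewrite /derivation_step => s_triv /and3P [/is_word_codeP [X <-] /admissible_sound [ins del]].
case: eqP => _ /andP [/eqP E1 /eqP E2].
  have := congr1 CodeSeq.decode E1; rewrite decode_pickle decode_ccat.
  case/map_pickle_cat=> [s1 [s2 [s12 s1_u s2_v]]].
  exists (s1 ++ X ++ s2); last by apply: ins; rewrite -s12.
  by rewrite E2 /ccat decode_ccat decode_pickle -s1_u -s2_v -!map_cat.
have := congr1 CodeSeq.decode E2; rewrite decode_pickle !decode_ccat decode_pickle.
case/map_pickle_cat=> [s1 [sXv [s_1Xv s1_u /map_pickle_cat [sX [s2 [sXv_X2 /map_pickle_inj sXX s2_v]]]]]].
rewrite s_1Xv sXv_X2 sXX in s_triv.
by exists (s1 ++ s2); [rewrite E1 /ccat -s1_u -s2_v -map_cat | apply: del].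
Qed.

Lemma derivation_cert_sound (w : word 'I_k) D :
  derivation_cert k cR (pickle w) D -> trivial_in R w.
Proof.
case/and3P=> /eqP z0 /eqP zL steps.
suff /(_ _ (leqnn _)) [s] : forall j, j <= cnth 1 D ->
    exists2 s, pickle s = cnth j (cnth 2 D) & trivial_in R s.
  by rewrite zL => /(pcan_inj pickleK) ->.
elim=> [|j IH] le_jL; first by exists [::]; [rewrite z0 | constructor].
have [s s_j s_triv] := IH (ltnW le_jL).
move: (allP steps j); rewrite mem_iota /= -s_j => /(_ le_jL).
exact: derivation_step_sound.
Qed.


Definition derivation (w : word 'I_k) (zs ss : seq nat) : Prop :=
  [/\ size zs = (size ss).+1, nth 0 zs 0 = 0, nth 0 zs (size ss) = pickle w &
      forall j, j < size ss ->
        derivation_step k cR (nth 0 zs j) (nth 0 zs j.+1) (nth 0 ss j)].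

Lemma derivation_rcons w1 w2 zs ss s : derivation w1 zs ss ->
  derivation_step k cR (pickle w1) (pickle w2) s ->
  derivation w2 (rcons zs (pickle w2)) (rcons ss s).
Proof.
case=> size_zs z0 zL steps step; split; rewrite ?size_rcons ?size_zs //.
- by rewrite nth_rcons size_zs /= z0.
- by rewrite nth_rcons size_zs ltnn eqxx.
move=> j; rewrite ltnS leq_eqVlt => /orP [/eqP ->|lt_j].
  by rewrite !nth_rcons size_zs ltnSn !ltnn !eqxx zL.
by rewrite !nth_rcons size_zs ltnS (ltnW lt_j) ltnS lt_j; apply: steps.
Qed.

Lemma derivation_step_ins (u v X : word 'I_k) t : admissible k cR (pickle X) t ->
  derivation_step k cR (pickle (u ++ v)) (pickle (u ++ X ++ v))
    (CodeSeq.code [:: pickle u; pickle v; pickle X; t; 0]).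
Proof.
by move=> X_adm; rewrite /derivation_step !cnth_code /= is_word_code_pickle !ccat_pickle !eqxx X_adm.
Qed.

Lemma derivation_step_del (u v X : word 'I_k) t : admissible k cR (pickle X) t ->
  derivation_step k cR (pickle (u ++ X ++ v)) (pickle (u ++ v))
    (CodeSeq.code [:: pickle u; pickle v; pickle X; t; 1]).
Proof.
move=> X_adm; rewrite /derivation_step !cnth_code /= is_word_code_pickle !ccat_pickle X_adm.
by rewrite (eqxx (pickle (u ++ v))) eqxx.
Qed.

Lemma admissible_pair (a : 'I_k * bool) t : admissible k cR (pickle [:: a; inv_letter a]) t.
Proof.
by rewrite /admissible (map_f (fun l : 'I_k * bool => pickle [:: l; inv_letter l])) ?mem_enum.
Qed.

Lemma admissible_relator r : R r -> exists t, admissible k cR (pickle r) t.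
Proof.
case/cR_enum=> y /run1_complete [t Ht]; exists t.
by rewrite /admissible Ht ?orbT.
Qed.

Lemma derivation_extend w1 w2 s : derivation_step k cR (pickle w1) (pickle w2) s ->
  (exists zs ss, derivation w1 zs ss) -> exists zs ss, derivation w2 zs ss.
Proof. by move=> step [zs [ss /derivation_rcons /(_ step) der]]; do 2 eexists; exact: der. Qed.

Lemma derivation_exists w : trivial_in R w -> exists zs ss, derivation w zs ss.
Proof.
elim=> [|u v a _|u v a _|u v r Rr _|u v r Rr _]; first by exists [:: 0], [::].
- exact: derivation_extend (@derivation_step_ins u v _ 0 (admissible_pair a 0)).
- exact: derivation_extend (@derivation_step_del u v _ 0 (admissible_pair a 0)).
- have [t r_adm] := admissible_relator Rr.
  exact: derivation_extend (@derivation_step_ins u v r t r_adm).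
- have [t r_adm] := admissible_relator Rr.
  exact: derivation_extend (@derivation_step_del u v r t r_adm).
Qed.

Lemma derivation_cert_complete w : trivial_in R w ->
  exists2 D, cnth 0 D = 0 & derivation_cert k cR (pickle w) D.
Proof.
case/derivation_exists=> zs [ss [size_zs z0 zL steps]].
set fields := [:: 0; size ss; CodeSeq.code zs; CodeSeq.code ss].
have D_fields i : cnth i (CodeSeq.code fields) = nth 0 fields i by apply: cnth_code.
exists (CodeSeq.code fields); first by rewrite D_fields.
rewrite /derivation_cert !D_fields /= !cnth_code z0 zL !eqxx /=.
by apply/allP => j; rewrite mem_iota /= !cnth_code; apply: steps.
Qed.

End Derivations.

Lemma mem_iota_ord k (i : 'I_k) : (i : nat) \in iota 0 k.
Proof. by rewrite mem_iota /= ltn_ord. Qed.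

Section Separation.
Variables (G : group) (m : nat) (gen : 'I_m -> G) (cG : code).
Hypothesis cG_decides : forall w : word 'I_m,
  (eval_word gen w = gone G -> eval cG [:: pickle w] 0) /\
  (eval_word gen w <> gone G -> eval cG [:: pickle w] 1).

Lemma run1_trivial t (s : word 'I_m) : run1 cG t (pickle s) = 1 -> eval_word gen s = gone G.
Proof.
move=> /run1_sound cG0; apply: NNPP => /(cG_decides s).2 cG1.
by have := eval_det cG0 cG1.
Qed.

Lemma run1_nontrivial t (s : word 'I_m) :
  run1 cG t (pickle s) = 2 -> eval_word gen s <> gone G.
Proof. by move=> /run1_sound cG1 /(cG_decides s).1 cG0; have := eval_det cG0 cG1. Qed.

Lemma run1_decides (ws : seq (word 'I_m)) : eventually (fun t => forall s, s \in ws ->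
  (eval_word gen s = gone G -> run1 cG t (pickle s) = 1) /\
  (eval_word gen s <> gone G -> run1 cG t (pickle s) = 2)).
Proof.
apply: eventually_forall_in => s _.
have [s1|s_neq1] := classic (eval_word gen s = gone G).
  have [t0 Ht0] := run1_complete ((cG_decides s).1 s1).
  by exists t0 => t /Ht0 ->.
have [t0 Ht0] := run1_complete ((cG_decides s).2 s_neq1).
by exists t0 => t /Ht0 ->.
Qed.

Variables (H : group) (k : nat) (h : 'I_k -> H) (R : word 'I_k -> Prop).
Variable R0 : seq (word 'I_k).
Hypothesis h_presents : forall w, eval_word h w = gone H <-> trivial_in R w.

Lemma separation_cert_assignment x D : separation_cert k m cG R0 x D ->
  exists U U' : 'I_k -> word 'I_m,
  [/\ forall i : 'I_k, cnth i (cnth 1 D) = pickle (U i),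
      forall i : 'I_k, cnth i (cnth 2 D) = pickle (U' i) &
      forall i, eval_word gen (U' i) = ginv (eval_word gen (U i))].
Proof.
case/and3P=> /allP words _ _.
have {}words (i : 'I_k) := words i (mem_iota_ord i).
pose U i : word 'I_m := odflt [::] (unpickle (cnth i (cnth 1 D))).
pose U' i : word 'I_m := odflt [::] (unpickle (cnth i (cnth 2 D))).
have PS_U (i : 'I_k) : cnth i (cnth 1 D) = pickle (U i).
  rewrite /U; have /and3P [/is_word_codeP [s <-] _ _] := words i.
  by rewrite pickleK.
have QS_U' (i : 'I_k) : cnth i (cnth 2 D) = pickle (U' i).
  rewrite /U'; have /and3P [_ /is_word_codeP [s <-] _] := words i.
  by rewrite pickleK.
exists U, U'; split=> // i; apply: ginv_unique; rewrite -eval_word_cat.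
have /and3P [_ _ /eqP] := words i.
by rewrite PS_U QS_U' ccat_pickle => /run1_trivial.
Qed.

Hypothesis R0_suffices : forall g : 'I_k -> G,
  (forall r, r \in R0 -> eval_word g r = gone G) -> forall r, R r -> eval_word g r = gone G.

Lemma separation_cert_sound (w : word 'I_k) D :
  separation_cert k m cG R0 (pickle w) D -> eval_word h w <> gone H.
Proof.
move=> cert; have [U [U' [PS_U QS_U' UU']]] := separation_cert_assignment cert.
case/and3P: cert => _ /allP R0_1 /eqP; rewrite (csubst_pickle _ PS_U QS_U').
move=> /run1_nontrivial; rewrite eval_subst_word // => w_neq1 /h_presents w_triv.
apply/w_neq1/(trivial_in_eval _ w_triv)/R0_suffices => r /R0_1 /eqP.
by rewrite (csubst_pickle _ PS_U QS_U') => /run1_trivial; rewrite eval_subst_word.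
Qed.


Lemma nth_map_enum_ord (F : 'I_k -> nat) (i : 'I_k) :
  nth 0 [seq F j | j <- enum 'I_k] i = F i.
Proof. by rewrite (nth_map i) ?size_enum_ord ?ltn_ord // nth_ord_enum. Qed.

Lemma separation_cert_of_assignment (U U' : 'I_k -> word 'I_m) (w : word 'I_k) :
  let g i := eval_word gen (U i) in
  (forall i, eval_word gen (U' i) = ginv (g i)) ->
  (forall r, r \in R0 -> eval_word g r = gone G) -> eval_word g w <> gone G ->
  exists2 D, cnth 0 D != 0 & separation_cert k m cG R0 (pickle w) D.
Proof.
move=> g UU' R0_1 w_neq1.
pose ws := [seq U i ++ U' i | i <- enum 'I_k] ++
  [seq subst_word U U' r | r <- R0] ++ [:: subst_word U U' w].
have [T /(_ T (leqnn T)) HT] := run1_decides ws.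
set fields := [:: 1; CodeSeq.code [seq pickle (U i) | i <- enum 'I_k];
  CodeSeq.code [seq pickle (U' i) | i <- enum 'I_k]; T].
have D_fields j : cnth j (CodeSeq.code fields) = nth 0 fields j by apply: cnth_code.
have PS_U (i : 'I_k) : cnth i (cnth 1 (CodeSeq.code fields)) = pickle (U i).
  by rewrite D_fields cnth_code (nth_map_enum_ord (fun j => pickle (U j))).
have QS_U' (i : 'I_k) : cnth i (cnth 2 (CodeSeq.code fields)) = pickle (U' i).
  by rewrite D_fields cnth_code (nth_map_enum_ord (fun j => pickle (U' j))).
exists (CodeSeq.code fields); first by rewrite D_fields.
rewrite /separation_cert; cbv zeta; rewrite (D_fields 3) (csubst_pickle _ PS_U QS_U').
apply/and3P; split.
- apply/allP => j; rewrite mem_iota /= => lt_jk; have -> : j = Ordinal lt_jk by [].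
  rewrite PS_U QS_U' !is_word_code_pickle ccat_pickle /=.
  have UU'_ws : U (Ordinal lt_jk) ++ U' (Ordinal lt_jk) \in ws.
    by rewrite mem_cat (map_f (fun i => U i ++ U' i)) ?mem_enum.
  by rewrite (HT _ UU'_ws).1 // eval_word_cat UU' gmulgV.
- apply/allP => r rR0; have r_ws : subst_word U U' r \in ws.
    by rewrite !mem_cat map_f ?orbT.
  by rewrite (csubst_pickle _ PS_U QS_U') (HT _ r_ws).1 // eval_subst_word // R0_1.
have w_ws : subst_word U U' w \in ws by rewrite !mem_cat mem_seq1 eqxx !orbT.
by rewrite (HT _ w_ws).2 // eval_subst_word.
Qed.

Hypothesis R0_sub : forall r, r \in R0 -> R r.

Lemma separation_cert_complete (w : word 'I_k) :
  generates gen -> residually H G -> eval_word h w <> gone H ->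
  exists2 D, cnth 0 D != 0 & separation_cert k m cG R0 (pickle w) D.
Proof.
move=> gen_G resHG /resHG [f [hom_f fw_neq1]].
have [U UP] := fin_all_exists (fun i : 'I_k => gen_G (f (h i))).
have [U' U'P] := fin_all_exists (fun i : 'I_k => gen_G (ginv (f (h i)))).
have f_eval r : eval_word (fun i => eval_word gen (U i)) r = f (eval_word h r).
  by rewrite eval_word_hom //; apply: eq_eval_word.
apply: (@separation_cert_of_assignment U U') => [i|r /R0_sub Rr|]; rewrite ?f_eval.
- by rewrite UP U'P.
- by rewrite (proj2 (h_presents r) (trivial_in_relator Rr)) hom1.
- exact: fw_neq1.
Qed.

End Separation.

Unset Implicit Arguments.
Theorem mainTheorem4 (G : group) :
  equationally_noetherian G -> has_solvable_WP G ->
  forall (H : group) (k : nat) (h : 'I_k -> H),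
    recursively_presented_wrt h -> residually H G ->
    solvable_WP_wrt h.
Proof.
move=> EN [m [gen [gen_G [cG cG_decides]]]] H k h [R [[cR cR_enum] [_ h_presents]]] resHG.
have [R0 [R0_sub R0_suffices]] := noetherian_finite_relators R EN.
have tag_computable : computable 1 (fun v => cnth 0 (nth 0 v 0) != 0) by computable_tac.
have [c c_decides] := computable_search (verdict := fun D => cnth 0 D != 0)
  (@computable_wp_cert k m cG cR R0) tag_computable.
exists c => w; split=> [w1 | w_neq1].
- apply: (c_decides _ false).
    have [D D0 cert] := derivation_cert_complete cR_enum ((h_presents w).1 w1).
    by exists D; rewrite /wp_cert D0.
  move=> D; rewrite /wp_cert; case: eqP => // _.
  by move=> /(separation_cert_sound cG_decides h_presents R0_suffices).
- apply: (c_decides _ true).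
    have [D D0 cert] := separation_cert_complete cG_decides h_presents R0_sub gen_G resHG w_neq1.
    by exists D; rewrite /wp_cert (negbTE D0).
  move=> D; rewrite /wp_cert; case: eqP => // _ /(derivation_cert_sound cR_enum).
  by move=> /h_presents.
Qed.
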